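(* Let $x=(x_1,\dots,x_n)$, $u$ an indeterminate, $t=(t_1,t_2,\dots)$. Then $$\prod_{i=1}^n(u\oplus x_i)=(u|t)^n+\sum_{r=1}^n(u|t)^{n-r}\big(1+\beta\,u\oplus t_{n+1-r}\big)G_{1^r}(x|\ominus t).$$ Setting $t_j=0$ for all $j$ this becomes $$\prod_{i=1}^n(u\oplus x_i)=u^n+(1+\beta u)\sum_{r=1}^nu^{n-r}G_{1^r}(x_1,\dots,x_n),$$ and for $r=1,\dots,n$ $$e_r(x_1,\dots,x_n)=\sum_{s=r}^n(-\beta)^{s-r}\binom{s-1}{s-r}G_{1^s}(x_1,\dots,x_n),$$ where $e_r$ is the elementary symmetric polynomial.
   Context: $\beta$ indeterminate, $x\oplus y=x+y+\beta xy$, $x\ominus y=(x-y)/(1+\beta y)$, $\ominus x=-x/(1+\beta x)$, $\ominus t=(\ominus t_1,\ominus t_2,\dots)$. $(u|t)^m=\prod_{i=1}^m(u\oplus t_i)$. $1^r$ is the partition with $r$ parts equal to $1$. Factorial Grothendieck polynomial: $G_\lambda(x|s)=\sum_T\beta^{|T|-|\lambda|}\prod_{(i,j)\in\lambda}\prod_{r\in T(i,j)}(x_r\oplus s_{r+j-i})$, summed over set-valued tableaux $T$ of shape $\lambda$ (nonempty subsets of $[n]$ in the boxes $(i,j)$, row $i$ column $j$, with $\max T(i,j)\le\min T(i,j+1)$, $\max T(i,j)<\min T(i+1,j)$), $|T|$ the total number of entries; $G_\lambda(x_1,\dots,x_n)$ denotes $G_\lambda(x|s)$ with all $s_j=0$.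 *)

From HB Require Import structures.
From mathcomp Require Import all_boot all_order all_algebra.
Set Implicit Arguments. Unset Strict Implicit. Unset Printing Implicit Defensive.
Import Order.TTheory GRing.Theory Num.Theory.
Local Open Scope ring_scope.

Section Groth.
Variable F : fieldType.
Variable beta : F.

Definition oplus (a b : F) : F := a + b + beta * a * b.
Definition ominus1 (a : F) : F := - a / (1 + beta * a).

(* (u|t)^m = prod_{i=1}^m (u (+) t_i); sequences t are 1-indexed: t j = t_j *)
Definition fpow (u : F) (t : nat -> F) (m : nat) : F :=
  \prod_(1 <= i < m.+1) oplus u (t i).

(* Boxes of the Young diagram of lam, 0-based (row i, column j);
   the paper's box (i+1, j+1). *)
Definition inbox (lam : seq nat) (p : 'I_(size lam) * 'I_(head 0%N lam)) : bool :=
  (p.2 < nth 0%N lam p.1)%N.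

(* Set-valued tableaux of shape lam with entries in [n] (entry r : 'I_n is the
   number r+1); boxes outside lam carry set0. *)
Definition is_svt (lam : seq nat) (n : nat)
  (T : {ffun 'I_(size lam) * 'I_(head 0%N lam) -> {set 'I_n}}) : bool :=
  [forall p, if inbox p then T p != set0 else T p == set0] &&
  [forall p, forall q,
     (inbox p && inbox q && (q.1 == p.1 :> nat) && (q.2 == p.2.+1 :> nat)) ==>
     [forall a in T p, forall b in T q, (a <= b)%N]] &&
  [forall p, forall q,
     (inbox p && inbox q && (q.2 == p.2 :> nat) && (q.1 == p.1.+1 :> nat)) ==>
     [forall a in T p, forall b in T q, (a < b)%N]].

(* Factorial Grothendieck polynomial G_lam(x|s), x = (x_1..x_n) given as
   x : 'I_n -> F (x r = x_{r+1}), s 1-indexed (s k = s_k).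
   For the entry r+1 in box (i+1, j+1) the factor is x_{r+1} (+) s_{r+1+j-i}. *)
Definition G (lam : seq nat) (n : nat) (x : 'I_n -> F) (s : nat -> F) : F :=
  \sum_(T : {ffun 'I_(size lam) * 'I_(head 0%N lam) -> {set 'I_n}} | is_svt T)
     beta ^+ ((\sum_p #|T p|) - sumn lam)%N *
     \prod_(p | inbox p) \prod_(r in T p) oplus (x r) (s ((r + p.2 - p.1).+1)%N).

Definition G0 (lam : seq nat) (n : nat) (x : 'I_n -> F) : F :=
  G lam x (fun _ => 0).

End Groth.

Definition elem_sym (F : fieldType) (n : nat) (x : 'I_n -> F) (r : nat) : F :=
  \sum_(I : {set 'I_n} | #|I| == r) \prod_(i in I) x i.

From HB Require Import structures.
From mathcomp Require Import all_boot all_order all_algebra.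
From mathcomp Require Import ring zify.
Set Implicit Arguments. Unset Strict Implicit. Unset Printing Implicit Defensive.
Import Order.TTheory GRing.Theory Num.Theory.
Local Open Scope ring_scope.

(* The largest entry n+1 can only sit in
   the bottom box, which either avoids it, equals {n+1}, or contains it together
   with smaller entries; counting the three kinds of tableaux gives
     G_{1^(r+1)}(x_1..x_(n+1)|s)
       = (1 + beta c) G_{1^(r+1)}(x_1..x_n|s) + c G_{1^r}(x_1..x_n|s),
   with c = x_(n+1) (+) s_(n+1-r).  The product formula follows by induction on n:
   for s = (-)t we have (u (+) t_j) (+) (x_(n+1) (+) s_j) = u (+) x_(n+1), so the
   new factor u (+) x_(n+1) is absorbed term by term.  The third one follows by induction on n from the same
   recursion, e_(r+1)(x_1..x_(n+1)) = e_(r+1)(x_1..x_n) + x_(n+1) e_r(x_1..x_n),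
   and Pascal's rule for the coefficients (-beta)^(s-r) C(s-1, s-r). *)

Section LiftSet.
Variable n : nat.
Implicit Types (S : {set 'I_n}) (A : {set 'I_n.+1}).

Definition lift_set S : {set 'I_n.+1} := [set lift ord_max a | a in S].
Definition unlift_set A : {set 'I_n} := [set a | lift ord_max a \in A].

Lemma mem_lift_set S a : (lift ord_max a \in lift_set S) = (a \in S).
Proof. by rewrite mem_imset //; apply: lift_inj. Qed.

Lemma ord_max_lift_set S : ord_max \notin lift_set S.
Proof. by apply/imsetP => -[a _ /eqP]; rewrite (negbTE (neq_lift _ _)). Qed.

Lemma lift_set_eq0 S : (lift_set S == set0) = (S == set0).
Proof. exact: imset_eq0. Qed.

Lemma card_lift_set S : #|lift_set S| = #|S|.
Proof. by rewrite card_imset //; apply: lift_inj. Qed.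

Lemma big_lift_set (R : Type) (idx : R) (op : Monoid.com_law idx) S (f : 'I_n.+1 -> R) :
  \big[op/idx]_(b in lift_set S) f b = \big[op/idx]_(a in S) f (lift ord_max a).
Proof. by rewrite big_imset //= => a b _ _; apply: lift_inj. Qed.

Lemma lift_setK : cancel lift_set unlift_set.
Proof. by move=> S; apply/setP => a; rewrite inE mem_lift_set. Qed.

Lemma unlift_setU1 A : unlift_set (ord_max |: A) = unlift_set A.
Proof. by apply/setP => a; rewrite !inE eq_sym (negbTE (neq_lift _ _)). Qed.

Lemma unlift_setK A : ord_max \notin A -> lift_set (unlift_set A) = A.
Proof.
move=> MA; apply/setP => b; case: (unliftP ord_max b) => [a ->|->].
  by rewrite mem_lift_set inE.
by rewrite (negbTE MA) (negbTE (ord_max_lift_set _)).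
Qed.

Lemma unlift_setKU1 A : ord_max \in A -> ord_max |: lift_set (unlift_set A) = A.
Proof.
move=> MA; apply/setP => b; rewrite inE; case: (unliftP ord_max b) => [a ->|->].
  by rewrite mem_lift_set !inE eq_sym (negbTE (neq_lift _ _)).
by rewrite set11 MA.
Qed.

Lemma setU1_lift_set_eq1 S : (ord_max |: lift_set S == [set ord_max]) = (S == set0).
Proof.
apply/eqP/eqP => [E|->]; last by rewrite /lift_set imset0 setU0.
apply/setP => a; rewrite inE; apply/negbTE/negP => aS.
have : lift ord_max a \in [set ord_max] by rewrite -E setU1r // mem_lift_set.
by rewrite inE eq_sym (negbTE (neq_lift _ _)).
Qed.

End LiftSet.

Definition set_lt n (A B : {set 'I_n}) : bool :=
  [forall a in A, forall b in B, (a < b)%N].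

Lemma set_ltUr n (A B C : {set 'I_n}) :
  set_lt A (B :|: C) = set_lt A B && set_lt A C.
Proof.
apply/forall_inP/andP => [lt_A_BC|[/forall_inP lt_AB /forall_inP lt_AC] a aA].
  by split; apply/forall_inP => a aA; apply/forall_inP => b bBC;
    apply: (forall_inP (lt_A_BC a aA)); rewrite inE bBC ?orbT.
apply/forall_inP => b; rewrite inE => /orP[bB|bC].
  exact: (forall_inP (lt_AB a aA)).
exact: (forall_inP (lt_AC a aA)).
Qed.

Lemma set_lt_lift n (A B : {set 'I_n}) :
  set_lt (lift_set A) (lift_set B) = set_lt A B.
Proof.
apply/forall_inP/forall_inP => lt_AB a aA.
  apply/forall_inP => b bB.
  have liftA : lift ord_max a \in lift_set A by rewrite mem_lift_set.
  have /forall_inP/(_ (lift ord_max b)) := lt_AB _ liftA.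
  by rewrite !lift_max mem_lift_set; apply.
case/imsetP: aA => a' a'A ->; apply/forall_inP => _ /imsetP[b bB ->].
by rewrite !lift_max; exact: (forall_inP (lt_AB a' a'A)).
Qed.

Lemma set_lt_lift_max n (A : {set 'I_n}) : set_lt (lift_set A) [set ord_max].
Proof.
apply/forall_inP => _ /imsetP[a _ ->]; apply/forall_inP => b /set1P ->.
by rewrite lift_max.
Qed.

Lemma set_lt_liftU1 n (A B : {set 'I_n}) :
  set_lt (lift_set A) (ord_max |: lift_set B) = set_lt A B.
Proof. by rewrite set_ltUr set_lt_lift_max set_lt_lift. Qed.

Definition col_tableau n r (T : {ffun 'I_r -> {set 'I_n}}) : bool :=
  [forall i, T i != set0] &&
  [forall i : 'I_r, forall j : 'I_r, (j == i.+1 :> nat) ==> set_lt (T i) (T j)].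

Definition lift_tab n r (T : {ffun 'I_r -> {set 'I_n}}) : {ffun 'I_r -> {set 'I_n.+1}} :=
  [ffun i => lift_set (T i)].

Definition unlift_tab n r (T : {ffun 'I_r -> {set 'I_n.+1}}) : {ffun 'I_r -> {set 'I_n}} :=
  [ffun i => unlift_set (T i)].

Lemma lift_tabK n r : cancel (@lift_tab n r) (@unlift_tab n r).
Proof. by move=> T; apply/ffunP => i; rewrite !ffunE lift_setK. Qed.

Lemma col_tableau_lift n r (T : {ffun 'I_r -> {set 'I_n}}) :
  col_tableau (lift_tab T) = col_tableau T.
Proof.
congr andb; apply: eq_forallb => i; rewrite ?ffunE ?lift_set_eq0 //.
by apply: eq_forallb => j; rewrite !ffunE set_lt_lift.
Qed.

Lemma col_tableau_max n r (T : {ffun 'I_r.+1 -> {set 'I_n.+1}}) i :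
  col_tableau T -> ord_max \in T i -> i = ord_max.
Proof.
case/andP => /forallP T_neq0 /forallP T_lt Mi.
case: (unliftP ord_max i) Mi => [j ->|//] Mj; exfalso.
have ltj : (j.+1 < r.+1)%N by rewrite ltnS ltn_ord.
have /set0Pn [b bj] := T_neq0 (Ordinal ltj).
have /forallP/(_ (Ordinal ltj)) := T_lt (lift ord_max j); rewrite lift_max eqxx /=.
move=> /forall_inP/(_ _ Mj)/forall_inP/(_ _ bj) /=.
by rewrite ltnNge -ltnS ltn_ord.
Qed.

Lemma col_tableau_card n r (T : {ffun 'I_r -> {set 'I_n}}) :
  col_tableau T -> (r <= \sum_i #|T i|)%N.
Proof.
case/andP => /forallP T_neq0 _; rewrite -[X in (X <= _)%N]card_ord -sum1_card.
by apply: leq_sum => i _; rewrite card_gt0 T_neq0.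
Qed.

Section ColumnGrothendieck.
Variables (F : fieldType) (beta : F).

(* Box i is the box (i+1, 1) of [G], whence the content shift -i; the truncated
   a - i is exact on tableaux, where the entries of box i are at least i. *)
Definition col_weight n r (x : 'I_n -> F) (s : nat -> F) (T : {ffun 'I_r -> {set 'I_n}}) : F :=
  beta ^+ (\sum_i #|T i| - r) * \prod_i \prod_(a in T i) oplus beta (x a) (s (a - i).+1).

Definition Gcol n r (x : 'I_n -> F) (s : nat -> F) : F :=
  \sum_(T : {ffun 'I_r -> {set 'I_n}} | col_tableau T) col_weight x s T.

Lemma col_weight_lift n r (x : 'I_n.+1 -> F) s (T : {ffun 'I_r -> {set 'I_n}}) :
  col_weight x s (lift_tab T) = col_weight (fun a : 'I_n => x (lift ord_max a)) s T.
Proof.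
rewrite /col_weight; congr (_ ^+ (_ - _) * _); apply: eq_bigr => i _.
  by rewrite ffunE card_lift_set.
by rewrite ffunE big_lift_set; apply: eq_bigr => a _; rewrite lift_max.
Qed.

Section MaxEntry.
Variables (n r : nat) (x : 'I_n.+1 -> F) (s : nat -> F).
Local Notation M := (@ord_max n).
Local Notation L := (@ord_max r).
Local Notation x' := (fun a : 'I_n => x (lift M a)).
Local Notation c := (oplus beta (x M) (s (n - r).+1)).

Lemma Gcol_max_notin :
  \sum_(T | col_tableau T && (M \notin T L)) col_weight x s T = Gcol r.+1 x' s.
Proof.
rewrite /Gcol (reindex_onto (@lift_tab n r.+1) (@unlift_tab n r.+1)) /=; last first.
  move=> T /andP[tabT MT]; apply/ffunP => i; rewrite !ffunE unlift_setK //.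
  by apply: contra MT => Mi; rewrite -(col_tableau_max tabT Mi).
apply: eq_big => [T|T _]; last exact: col_weight_lift.
by rewrite col_tableau_lift lift_tabK eqxx /lift_tab ffunE (ord_max_lift_set (T L)) !andbT.
Qed.

Definition snoc_max_tab (T : {ffun 'I_r -> {set 'I_n}}) : {ffun 'I_r.+1 -> {set 'I_n.+1}} :=
  [ffun i => if unlift L i is Some j then lift_set (T j) else [set M]].

Lemma col_tableau_snoc_max T : col_tableau (snoc_max_tab T) = col_tableau T.
Proof.
apply/andP/andP => -[/forallP T_neq0 /forallP T_lt]; split.
- by apply/forallP => j; have := T_neq0 (lift L j); rewrite ffunE liftK lift_set_eq0.
- apply/forallP => i; apply/forallP => j; have /forallP/(_ (lift L j)) := T_lt (lift L i).
  by rewrite !ffunE !liftK !lift_max set_lt_lift.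
- apply/forallP => i; rewrite ffunE; case: unliftP => [j _|_]; first by rewrite lift_set_eq0.
  by apply/set0Pn; exists M; rewrite in_set1.
apply/forallP => i; apply/forallP => j; rewrite !ffunE.
case: (unliftP L i) => [i' ->|->]; case: (unliftP L j) => [j' ->|->];
  rewrite ?liftK ?unlift_none.
- by rewrite !lift_max set_lt_lift; have /forallP := T_lt i'; apply.
- by rewrite set_lt_lift_max implybT.
- by rewrite lift_max /= (ltn_eqF (ltn_trans (ltn_ord j') (ltnSn r))).
by rewrite /= eqn_leq ltnn andbF.
Qed.

Lemma col_weight_snoc_max T : col_weight x s (snoc_max_tab T) = c * col_weight x' s T.
Proof.
rewrite /col_weight (bigD1_ord L) //= (bigD1_ord L) //= ffunE unlift_none cards1 big_set1.
rewrite add1n subSS mulrCA; congr (_ * (_ ^+ (_ - _) * _)).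
  by apply: eq_bigr => i _; rewrite ffunE liftK card_lift_set.
apply: eq_bigr => i _; rewrite ffunE liftK big_lift_set.
by apply: eq_bigr => a _; rewrite lift_max /bump leqNgt ltn_ord.
Qed.

Lemma Gcol_max_alone :
  \sum_(T | col_tableau T && (M \in T L) && (T L == [set M])) col_weight x s T =
  c * Gcol r x' s.
Proof.
rewrite /Gcol big_distrr (reindex_onto snoc_max_tab
  (fun T : {ffun 'I_r.+1 -> {set 'I_n.+1}} => [ffun j => unlift_set (T (lift L j))])) /=.
  apply: eq_big => [T|T _]; last exact: col_weight_snoc_max.
  rewrite col_tableau_snoc_max ffunE unlift_none set11 eqxx /=.
  suff -> : [ffun j => unlift_set (snoc_max_tab T (lift L j))] = T by rewrite eqxx !andbT.
  by apply/ffunP => j; rewrite !ffunE liftK lift_setK.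
move=> T /andP[/andP[tabT _] /eqP TL]; apply/ffunP => i; rewrite !ffunE.
case: unliftP => [j ->|->]; last by rewrite TL.
rewrite ffunE unlift_setK //; apply/negP => /(col_tableau_max tabT)/eqP.
by rewrite eq_sym (negbTE (neq_lift _ _)).
Qed.

Definition add_max_tab (T : {ffun 'I_r.+1 -> {set 'I_n}}) : {ffun 'I_r.+1 -> {set 'I_n.+1}} :=
  [ffun i => if i == L then M |: lift_set (T i) else lift_set (T i)].

Lemma col_tableau_add_max T :
  col_tableau (add_max_tab T) && (T L != set0) = col_tableau T.
Proof.
have neq0_add i : (add_max_tab T i != set0) = (i == L) || (T i != set0).
  rewrite ffunE; case: (i == L); last by rewrite lift_set_eq0.
  by apply/set0Pn; exists M; rewrite setU11.
have lt_add (i j : 'I_r.+1) : (j == i.+1 :> nat) ->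
    set_lt (add_max_tab T i) (add_max_tab T j) = set_lt (T i) (T j).
  move=> /eqP ji; rewrite !ffunE; have -> : (i == L) = false.
    by apply/negbTE/eqP => iL; move: (ltn_ord j); rewrite ji iL /= ltnn.
  by case: (j == L); rewrite ?set_lt_liftU1 ?set_lt_lift.
rewrite /col_tableau andbAC; congr andb; last first.
  apply: eq_forallb => i; apply: eq_forallb => j.
  by case: (boolP (j == i.+1 :> nat)) => // /lt_add ->.
apply/andP/forallP => [[/forallP add_neq0 TL] i|T_neq0]; last first.
  by split; [apply/forallP => i; rewrite neq0_add T_neq0 orbT | exact: T_neq0].
by case: (eqVneq i L) => [->//|iL]; have := add_neq0 i; rewrite neq0_add (negbTE iL).
Qed.

Lemma col_weight_add_max T : col_tableau T ->
  col_weight x s (add_max_tab T) = beta * c * col_weight x' s T.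
Proof.
move=> tabT; rewrite /col_weight.
have card_add : (\sum_i #|add_max_tab T i| = (\sum_i #|T i|).+1)%N.
  rewrite (bigD1_ord L) // [in RHS](bigD1_ord L) //= ffunE eqxx cardsU1.
  rewrite (ord_max_lift_set (T L)) card_lift_set add1n addSn; congr (_ + _).+1%N.
  by apply: eq_bigr => i _; rewrite ffunE eq_sym (negbTE (neq_lift _ _)) card_lift_set.
have prod_add : \prod_i \prod_(a in add_max_tab T i) oplus beta (x a) (s (a - i).+1) =
    c * \prod_i \prod_(a in T i) oplus beta (x' a) (s (a - i).+1).
  rewrite (bigD1_ord L) // [X in _ * X](bigD1_ord L) //= ffunE eqxx.
  rewrite big_setU1 ?(ord_max_lift_set (T L)) //= mulrA big_lift_set.
  congr (_ * _ * _); first by apply: eq_bigr => a _; rewrite lift_max.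
  apply: eq_bigr => i _; rewrite ffunE eq_sym (negbTE (neq_lift _ _)) big_lift_set.
  by apply: eq_bigr => a _; rewrite lift_max /bump leqNgt ltn_ord.
rewrite card_add prod_add subSn ?col_tableau_card // exprS; ring.
Qed.

Lemma Gcol_max_shared :
  \sum_(T | col_tableau T && (M \in T L) && (T L != [set M])) col_weight x s T =
  beta * c * Gcol r.+1 x' s.
Proof.
rewrite /Gcol big_distrr (reindex_onto add_max_tab (@unlift_tab n r.+1)) /=.
  have add_max_tabK T : unlift_tab (add_max_tab T) = T.
    by apply/ffunP => i; rewrite !ffunE; case: (i == L); rewrite ?unlift_setU1 lift_setK.
  have pred_add T : col_tableau (add_max_tab T) && (M \in add_max_tab T L) &&
      (add_max_tab T L != [set M]) && (unlift_tab (add_max_tab T) == T) = col_tableau T.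
    by rewrite -col_tableau_add_max add_max_tabK ffunE eqxx setU11 setU1_lift_set_eq1 eqxx !andbT.
  by apply: eq_big => [T|T]; rewrite ?pred_add // => /col_weight_add_max.
move=> T /andP[/andP[tabT MT] _]; apply/ffunP => i; rewrite !ffunE.
case: eqP => [->|/eqP iL]; first by rewrite unlift_setKU1.
by rewrite unlift_setK //; apply: contra iL => /(col_tableau_max tabT)->.
Qed.

End MaxEntry.

Lemma GcolS n r (x : 'I_n.+1 -> F) s :
  Gcol r.+1 x s =
  (1 + beta * oplus beta (x ord_max) (s (n - r).+1)) *
    Gcol r.+1 (fun a : 'I_n => x (lift ord_max a)) s +
  oplus beta (x ord_max) (s (n - r).+1) * Gcol r (fun a : 'I_n => x (lift ord_max a)) s.
Proof.
rewrite {1}/Gcol (bigID (fun T : {ffun 'I_r.+1 -> {set 'I_n.+1}} => ord_max \in T ord_max)) /=.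
rewrite (bigID (fun T : {ffun 'I_r.+1 -> {set 'I_n.+1}} => T ord_max == [set ord_max])) /=.
rewrite Gcol_max_alone Gcol_max_shared Gcol_max_notin; ring.
Qed.

Lemma Gcoln0 n (x : 'I_n -> F) s : Gcol 0 x s = 1.
Proof.
rewrite /Gcol (eq_bigl xpredT) => [|T]; last by apply/andP; split; apply/forallP => -[].
rewrite (eq_bigr (fun _ => 1)) => [|T _]; last by rewrite /col_weight !big_ord0 expr0 mulr1.
by rewrite sumr_const card_ffun card_ord expn0.
Qed.

Lemma Gcol_small n r (x : 'I_n -> F) s : (n < r)%N -> Gcol r x s = 0.
Proof.
elim: n x r => [|n IHn] x [|r] // lt_nr.
  rewrite /Gcol big1 // => T /andP[/forallP/(_ ord0)/set0Pn[[]]] //.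
by rewrite GcolS !IHn ?mulr0 ?addr0 // ltnW.
Qed.

End ColumnGrothendieck.

Lemma big_pair_ord1 (R : Type) (idx : R) (op : Monoid.com_law idx) m (g : 'I_m * 'I_1 -> R) :
  \big[op/idx]_p g p = \big[op/idx]_i g (i, ord0).
Proof.
rewrite (reindex (fun i : 'I_m => (i, ord0))) //.
by apply: onW_bij; exists fst => [//|[i j]]; rewrite [j]ord1.
Qed.

Section ColumnShape.
Variable r : nat.
Local Notation lam := (nseq r.+1 1%N).
Local Notation m := (size lam).

Lemma inbox_column (p : 'I_m * 'I_1) : inbox p.
Proof. by rewrite /inbox nth_nseq [p.2]ord1 (leq_trans (ltn_ord p.1)) // size_nseq. Qed.

Definition column_svt n (T : {ffun 'I_m -> {set 'I_n}}) : {ffun 'I_m * 'I_1 -> {set 'I_n}} :=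
  [ffun p => T p.1].

Lemma column_svtE n (T : {ffun 'I_m -> {set 'I_n}}) p : column_svt T p = T p.1.
Proof. exact: ffunE. Qed.

Lemma column_svt_bij n : bijective (@column_svt n).
Proof.
exists (fun T : {ffun 'I_m * 'I_1 -> {set 'I_n}} => [ffun i => T (i, ord0)]) => T.
  by apply/ffunP => i; rewrite !ffunE.
by apply/ffunP => -[i j]; rewrite !ffunE [j]ord1.
Qed.

Lemma is_svt_column n (T : {ffun 'I_m -> {set 'I_n}}) :
  is_svt (column_svt T) = col_tableau T.
Proof.
have rows_vacuous : [forall p, forall q,
    (inbox p && inbox q && (q.1 == p.1 :> nat) && (q.2 == p.2.+1 :> nat)) ==>
    [forall a in column_svt T p, forall b in column_svt T q, (a <= b)%N]].
  apply/forallP => p; apply/forallP => q; apply/implyP => /andP[_ /eqP q2].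
  by have := ltn_ord q.2; rewrite q2 [p.2]ord1.
rewrite /is_svt rows_vacuous andbT; congr andb.
  apply/forallP/forallP => T_neq0 i; last by rewrite inbox_column ffunE T_neq0.
  by have := T_neq0 (i, ord0); rewrite inbox_column ffunE.
apply/forallP/forallP => T_lt => [i|[i a]]; apply/forallP.
  move=> j; have /forallP/(_ (j, ord0)) := T_lt (i, ord0).
  by rewrite !inbox_column !ffunE.
move=> [j b]; rewrite !inbox_column !ffunE /= [a]ord1 [b]ord1 eqxx /=.
exact: (forallP (T_lt i) j).
Qed.

Lemma G_column (F : fieldType) (beta : F) n (x : 'I_n -> F) s :
  G beta lam x s = Gcol beta r.+1 x s.
Proof.
rewrite -{2}(size_nseq r.+1 1%N) /G /Gcol (reindex _ (onW_bij _ (@column_svt_bij n))).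
apply: eq_big => [T|T _]; first exact: is_svt_column.
rewrite /col_weight (eq_bigl xpredT _ inbox_column) !big_pair_ord1.
congr (_ ^+ (_ - _) * _); first by apply: eq_bigr => i _; rewrite column_svtE.
  by rewrite sumn_nseq size_nseq mul1n.
by apply: eq_bigr => i _; rewrite column_svtE; apply: eq_bigr => a _; rewrite addn0.
Qed.

End ColumnShape.

Section Expansion.
Variables (F : fieldType) (beta : F).
Local Notation oplus := (oplus beta).
Local Notation fpow := (fpow beta).
Local Notation Gcol := (Gcol beta).

Lemma oplusr0 a : oplus a 0 = a.
Proof. by rewrite /oplus addr0 mulr0 addr0. Qed.

Lemma oplusACA a b c d : oplus (oplus a b) (oplus c d) = oplus (oplus a c) (oplus b d).
Proof. rewrite /oplus; ring. Qed.

Lemma one_add_oplus a b : 1 + beta * oplus a b = (1 + beta * a) * (1 + beta * b).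
Proof. rewrite /oplus; ring. Qed.

Lemma oplus_ominus1 t : 1 + beta * t != 0 -> oplus t (ominus1 beta t) = 0.
Proof. by move=> t_unit; rewrite /oplus /ominus1; field. Qed.

Lemma fpow0 u t : fpow u t 0 = 1.
Proof. by rewrite /fpow big_geq. Qed.

Lemma fpowS u t k : fpow u t k.+1 = fpow u t k * oplus u (t k.+1).
Proof. by rewrite /fpow big_nat_recr. Qed.

Lemma fpow_t0 u k : fpow u (fun=> 0) k = u ^+ k.
Proof.
rewrite /fpow (eq_bigr (fun=> u)) => [|i _]; last exact: oplusr0.
by rewrite prodr_const_nat subn1.
Qed.

Lemma prod_oplus_Gcol n u (x : 'I_n -> F) (t s : nat -> F) :
  (forall j, (0 < j <= n)%N -> oplus (t j) (s j) = 0) ->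
  \prod_(i < n) oplus u (x i) =
  fpow u t n + \sum_(k < n) fpow u t k * (1 + beta * oplus u (t k.+1)) * Gcol (n - k) x s.
Proof.
elim: n x => [|n IHn] x ts_cancel; first by rewrite big_ord0 fpow0 big_ord0 addr0.
set x' := fun a : 'I_n => x (lift ord_max a).
set w := oplus u (x ord_max).
set c := fun k => oplus (x ord_max) (s k.+1).
set A := fun k => fpow u t k * (1 + beta * oplus u (t k.+1)).
have w_split k : (k <= n)%N -> oplus (oplus u (t k.+1)) (c k) = w.
  by move=> le_kn; rewrite oplusACA ts_cancel ?oplusr0.
have fpow_w : fpow u t n * w = fpow u t n.+1 + A n * c n.
  by rewrite -(w_split n) // fpowS /A /c /oplus; ring.
have A_w k : (k <= n)%N -> A k * w = fpow u t k.+1 * (1 + beta * w) + A k * c k.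
  by move=> le_kn; rewrite -(w_split k le_kn) fpowS /A /c /oplus; ring.
have A_c k : (k <= n)%N -> A k * (1 + beta * c k) = fpow u t k * (1 + beta * w).
  by move=> le_kn; rewrite -(w_split k le_kn) one_add_oplus /A mulrA.
have Gcol_x k : (k <= n)%N ->
    Gcol (n.+1 - k) x s = (1 + beta * c k) * Gcol (n - k).+1 x' s + c k * Gcol (n - k) x' s.
  by move=> le_kn; rewrite subSn // GcolS subKn.
rewrite (bigD1_ord ord_max) //= (IHn x') => [|j /andP[j0 le_jn]]; last first.
  by apply: ts_cancel; rewrite j0 leqW.
rewrite mulrDr mulrC fpow_w mulr_sumr.
rewrite (eq_bigr (fun k : 'I_n.+1 => fpow u t k * (1 + beta * w) * Gcol (n - k).+1 x' s +
    A k * c k * Gcol (n - k) x' s)) => [|k _]; last first.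
  by rewrite (Gcol_x k (ltn_ord k)) mulrDr !mulrA (A_c k (ltn_ord k)).
rewrite big_split /= big_ord_recl big_ord_recr /= subn0 Gcol_small // mulr0 add0r.
rewrite subnn Gcoln0 mulr1 -!addrA; congr (_ + _).
rewrite addrC addrA -big_split /=; congr (_ + _); apply: eq_bigr => k _.
by rewrite /bump leq0n add1n subnSK // mulrCA -/w -/(A k) mulrA A_w 1?ltnW // mulrDl.
Qed.

Lemma sum_G_column n (x : 'I_n -> F) s (a : nat -> F) :
  \sum_(1 <= r < n.+1) a r * G beta (nseq r 1%N) x s =
  \sum_(k < n) a (n - k)%N * Gcol (n - k) x s.
Proof.
rewrite big_add1 /= big_mkord (reindex_inj rev_ord_inj) /=.
by apply: eq_bigr => k _; rewrite G_column subnSK.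
Qed.

Lemma prod_oplus_G_factorial n u (x : 'I_n -> F) (t : nat -> F) :
  (forall j, (0 < j <= n)%N -> 1 + beta * t j != 0) ->
  \prod_(i < n) oplus u (x i) =
    fpow u t n +
    \sum_(1 <= r < n.+1)
       fpow u t (n - r) * (1 + beta * oplus u (t (n.+1 - r)%N)) *
       G beta (nseq r 1%N) x (fun j => ominus1 beta (t j)).
Proof.
move=> t_unit; rewrite sum_G_column (@prod_oplus_Gcol n u x t (fun j => ominus1 beta (t j)));
  last by move=> j /t_unit; exact: oplus_ominus1.
congr (_ + _); apply: eq_bigr => k _.
have n_nk : (n - (n - k) = k)%N by rewrite subKn // ltnW.
by rewrite n_nk subSn ?leq_subr // n_nk.
Qed.

Lemma prod_oplus_G0 n u (x : 'I_n -> F) :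
  \prod_(i < n) oplus u (x i) =
    u ^+ n + (1 + beta * u) * \sum_(1 <= r < n.+1) u ^+ (n - r) * G0 beta (nseq r 1%N) x.
Proof.
rewrite (@prod_oplus_Gcol n u x (fun=> 0) (fun=> 0)) => [|j _]; last exact: oplusr0.
rewrite fpow_t0 /G0 sum_G_column mulr_sumr; congr (_ + _); apply: eq_bigr => k _.
by rewrite fpow_t0 oplusr0 subKn 1?ltnW // mulrA [_ * u ^+ k]mulrC.
Qed.

End Expansion.

Section ElementarySymmetric.
Variables (F : fieldType) (beta : F).

Lemma elem_sym0 n (x : 'I_n -> F) : elem_sym x 0 = 1.
Proof.
rewrite /elem_sym (eq_bigl (pred1 set0)) => [|I]; last by rewrite cards_eq0.
by rewrite big_pred1_eq big_set0.
Qed.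

Lemma elem_sym_small n (x : 'I_n -> F) r : (n < r)%N -> elem_sym x r = 0.
Proof.
move=> lt_nr; rewrite /elem_sym big1 // => I /eqP cardI.
by have := max_card (mem I); rewrite card_ord -/(#|I|) cardI leqNgt lt_nr.
Qed.

Lemma elem_symS n (x : 'I_n.+1 -> F) r :
  elem_sym x r.+1 =
  elem_sym (fun a : 'I_n => x (lift ord_max a)) r.+1 +
  x ord_max * elem_sym (fun a : 'I_n => x (lift ord_max a)) r.
Proof.
rewrite /elem_sym (bigID (fun I : {set 'I_n.+1} => ord_max \in I)) /= addrC; congr (_ + _).
  rewrite (reindex_onto (@lift_set n) (@unlift_set n)) => [|I /andP[_ MI]]; last first.
    exact: unlift_setK.
  apply: eq_big => [J|J _]; last exact: big_lift_set.
  by rewrite card_lift_set (ord_max_lift_set J) lift_setK eqxx !andbT.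
rewrite big_distrr (reindex_onto (fun J => ord_max |: lift_set J) (@unlift_set n)) /=; last first.
  by move=> I /andP[_ MI]; rewrite unlift_setKU1.
apply: eq_big => [J|J _].
  by rewrite cardsU1 (ord_max_lift_set J) card_lift_set setU11 unlift_setU1 lift_setK eqxx !andbT.
by rewrite big_setU1 ?(ord_max_lift_set J) //= big_lift_set.
Qed.

Definition esym_G_coef (s r : nat) : F :=
  if (r <= s)%N then (- beta) ^+ (s - r) * ('C(s.-1, s - r))%:R else 0.

Lemma esym_G_coef0S k : esym_G_coef 0 k.+1 = 0.
Proof. by []. Qed.

Lemma esym_G_coefn0 s : esym_G_coef s 0 = (s == 0%N)%:R.
Proof.
case: s => [|s]; rewrite /esym_G_coef subn0; first by rewrite expr0 mul1r.
by rewrite bin_small ?mulr0.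
Qed.

Lemma esym_G_coefS s k : esym_G_coef s.+1 k.+1 + beta * esym_G_coef s k.+1 = esym_G_coef s k.
Proof.
rewrite /esym_G_coef ltnS; case: (ltngtP k s) => [lt_ks|_|<-]; last first.
- by rewrite mulr0 addr0 !subnn !bin0.
- by rewrite mulr0 addr0.
have [m ->] : exists m, s = (k + m).+1 by exists (s - k.+1)%N; lia.
have -> : ((k + m).+1 - k.+1 = m)%N by lia.
rewrite subSS; have -> : ((k + m).+1 - k = m.+1)%N by lia.
by rewrite binS natrD exprS; ring.
Qed.

Lemma elem_sym_Gcol n (x : 'I_n -> F) r :
  elem_sym x r = \sum_(s < n.+1) esym_G_coef s r * Gcol beta s x (fun=> 0).
Proof.
elim: n x r => [|n IHn] x [|k].
- by rewrite elem_sym0 big_ord1 esym_G_coefn0 Gcoln0 mulr1.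
- by rewrite elem_sym_small // big_ord1 esym_G_coef0S mul0r.
- rewrite elem_sym0 big_ord_recl esym_G_coefn0 Gcoln0 mulr1 big1 ?addr0 // => s _.
  by rewrite esym_G_coefn0 mul0r.
set x' := fun a : 'I_n => x (lift ord_max a).
set G' := fun s => Gcol beta s x' (fun=> 0).
have G'_shift : \sum_(s < n.+1) esym_G_coef s k.+1 * G' s =
    \sum_(s < n.+1) esym_G_coef s.+1 k.+1 * G' s.+1.
  rewrite big_ord_recl [RHS]big_ord_recr /= esym_G_coef0S mul0r add0r.
  by rewrite /G' Gcol_small // mulr0 addr0.
have coef_split : \sum_(s < n.+1) esym_G_coef s k * G' s =
    \sum_(s < n.+1) esym_G_coef s.+1 k.+1 * G' s +
    beta * \sum_(s < n.+1) esym_G_coef s k.+1 * G' s.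
  by rewrite mulr_sumr -big_split; apply: eq_bigr => s _ /=; rewrite -esym_G_coefS; ring.
rewrite (elem_symS x k) !IHn -/G' coef_split G'_shift [RHS]big_ord_recl esym_G_coef0S mul0r add0r.
rewrite mulr_sumr -big_split mulr_sumr -big_split; apply: eq_bigr => i _ /=.
rewrite /bump leq0n add1n GcolS oplusr0 -/x' -/(G' i) -/(G' i.+1); ring.
Qed.

Lemma elem_sym_G0 n (x : 'I_n -> F) r : (1 <= r <= n)%N ->
  elem_sym x r =
  \sum_(r <= s < n.+1) (- beta) ^+ (s - r) * ('C(s.-1, s - r))%:R * G0 beta (nseq s 1%N) x.
Proof.
case/andP => r_gt0 le_rn.
rewrite elem_sym_Gcol -(big_mkord xpredT (fun s => esym_G_coef s r * Gcol beta s x (fun=> 0))).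
rewrite (@big_cat_nat _ _ _ r) ?leqW //= big_nat big1 ?add0r => [|s /andP[_ lt_sr]]; last first.
  by rewrite /esym_G_coef leqNgt lt_sr mul0r.
apply: eq_big_nat => -[|s] /andP[le_rs _]; first by move: (leq_trans r_gt0 le_rs).
by rewrite /G0 G_column /esym_G_coef le_rs.
Qed.

End ElementarySymmetric.

Theorem mainTheorem5 :
  (forall (F : fieldType) (n : nat) (beta u : F) (x : 'I_n -> F) (t : nat -> F),
     (forall j, (0 < j <= n)%N -> 1 + beta * t j != 0) ->
     \prod_(i < n) oplus beta u (x i) =
       fpow beta u t n +
       \sum_(1 <= r < n.+1)
          fpow beta u t (n - r) * (1 + beta * oplus beta u (t (n.+1 - r)%N)) *
          G beta (nseq r 1%N) x (fun j => ominus1 beta (t j))) /\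
  (forall (F : fieldType) (n : nat) (beta u : F) (x : 'I_n -> F),
     \prod_(i < n) oplus beta u (x i) =
       u ^+ n + (1 + beta * u) *
         \sum_(1 <= r < n.+1) u ^+ (n - r) * G0 beta (nseq r 1%N) x) /\
  (forall (F : fieldType) (n : nat) (beta : F) (x : 'I_n -> F) (r : nat),
     (1 <= r <= n)%N ->
     elem_sym x r =
       \sum_(r <= s < n.+1)
          (- beta) ^+ (s - r) * ('C(s.-1, s - r))%:R * G0 beta (nseq s 1%N) x).
Proof.
split; first by move=> F n beta u x t; exact: prod_oplus_G_factorial.
split; first by move=> F n beta u x; exact: prod_oplus_G0.
by move=> F n beta x r; exact: elem_sym_G0.
Qed.
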